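(* Let $G$ be an infinite group in which every non-abelian subgroup $H$ satisfies $C_G(H)\le H$. Then every normal subgroup of $G$ is abelian or infinite.
   Context: $C_G(H)$ denotes the centralizer of $H$ in $G$. *)

From Stdlib Require Import List.

Record group_struct (T : Type) (mul : T -> T -> T) (inv : T -> T) (e : T) : Prop := {
  g_assoc : forall x y z, mul x (mul y z) = mul (mul x y) z;
  g_idl : forall x, mul e x = x;
  g_idr : forall x, mul x e = x;
  g_invl : forall x, mul (inv x) x = e;
  g_invr : forall x, mul x (inv x) = e
}.

Section GroupNotions.
Context {T : Type} (mul : T -> T -> T) (inv : T -> T) (e : T).

Definition is_subgroup (H : T -> Prop) : Prop :=
  H e /\ (forall x y, H x -> H y -> H (mul x y)) /\ (forall x, H x -> H (inv x)).

Definition is_normal (H : T -> Prop) : Prop :=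
  is_subgroup H /\ (forall g h, H h -> H (mul (mul (inv g) h) g)).

Definition is_abelian (H : T -> Prop) : Prop :=
  forall x y, H x -> H y -> mul x y = mul y x.

Definition centralizer (H : T -> Prop) : T -> Prop :=
  fun g => forall h, H h -> mul g h = mul h g.

End GroupNotions.

Definition subset {T : Type} (A B : T -> Prop) : Prop := forall x, A x -> B x.

Definition finite_set {T : Type} (A : T -> Prop) : Prop :=
  exists l : list T, forall x, A x -> In x l.

Definition infinite_set {T : Type} (A : T -> Prop) : Prop := ~ finite_set A.

(* A finite normal subgroup N is permuted by conjugation, and there are only
   finitely many maps N -> N.  Two elements g, h inducing the same map differ
   by g h^-1 in the centralizer of N, so C_G(N) has finite index.  If N is
   non-abelian the hypothesis puts C_G(N) inside the finite N, so G is finite. *)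
From Stdlib Require Import List Classical.
Import ListNotations.

Section FiniteSets.
Context {T : Type}.

Lemma finite_set_enum (A : T -> Prop) :
  finite_set A -> exists l, forall x, A x <-> In x l.
Proof.
  intros [l Hl].
  assert (Hsub : exists l0, (forall x, In x l0 -> A x) /\
                            (forall x, A x -> In x l -> In x l0)).
  { clear Hl. induction l as [|a l [l0 [H1 H2]]].
    - exists nil; split; [intros x []|intros x _ []].
    - destruct (classic (A a)) as [Ha|Ha].
      + exists (a :: l0); split.
        * intros x [<-|Hx]; auto.
        * intros x Ax [<-|Hx]; [now left|right; auto].
      + exists l0; split; auto.
        intros x Ax [<-|Hx]; [contradiction|auto]. }
  destruct Hsub as [l0 [H1 H2]].
  exists l0; split; auto.
Qed.

Lemma finite_set_lists (A : T -> Prop) (n : nat) :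
  finite_set A ->
  finite_set (fun s : list T => length s = n /\ forall y, In y s -> A y).
Proof.
  intros [lA HA].
  induction n as [|n [Ls HLs]].
  - exists [nil]. intros [|y s] [Hlen _]; [now left|discriminate].
  - exists (flat_map (fun y => map (cons y) Ls) lA).
    intros [|y s] [Hlen Hs]; [discriminate|].
    apply in_flat_map. exists y. split; [apply HA, Hs; now left|].
    apply in_map, HLs. split; [now injection Hlen|].
    intros z Hz; apply Hs; now right.
Qed.

Lemma finite_image_representatives {C : Type} (f : T -> C) (B : C -> Prop) :
  finite_set B -> exists M : list T,
    forall g, B (f g) -> exists h, In h M /\ f h = f g.
Proof.
  intros [L HL].
  assert (HM : exists M : list T,
            forall g, In (f g) L -> exists h, In h M /\ f h = f g).
  { clear HL. induction L as [|c L [M HM]].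
    - exists nil; intros g [].
    - destruct (classic (exists g, f g = c)) as [[g0 Hg0]|Hn].
      + exists (g0 :: M). intros g [Hc|Hg].
        * exists g0; split; [now left|congruence].
        * destruct (HM g Hg) as [h [Hh Hf]]; exists h; split; [now right|auto].
      + exists M. intros g [Hc|Hg]; [exfalso; eauto|auto]. }
  destruct HM as [M HM]; exists M; auto.
Qed.

Lemma finite_set_products (op : T -> T -> T) (A : T -> Prop) (M : list T) :
  finite_set A -> finite_set (fun g => exists a h, A a /\ In h M /\ g = op a h).
Proof.
  intros [l Hl].
  exists (flat_map (fun a => map (op a) M) l).
  intros g (a & h & Ha & Hh & ->).
  apply in_flat_map. exists a. split; [now apply Hl|now apply in_map].
Qed.

End FiniteSets.

Section Conjugation.
Context {T : Type} (mul : T -> T -> T) (inv : T -> T) (e : T).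
Hypothesis hG : group_struct T mul inv e.

Let conj g x := mul (mul (inv g) x) g.

Lemma mul_invK g h : mul (mul g (inv h)) h = g.
Proof. destruct hG as [assoc _ idr invl _]. now rewrite <- assoc, invl, idr. Qed.

Lemma conj_eq_centralizer (N : T -> Prop) g h :
  (forall x, N x -> conj g x = conj h x) ->
  centralizer mul N (mul g (inv h)).
Proof.
  intros Hgh x Nx.
  pose proof (f_equal (fun z => mul g (mul z (inv h))) (Hgh x Nx)) as E.
  destruct hG as [assoc idl idr invl invr]; unfold conj in E; simpl in E.
  rewrite <- !assoc, invr, idr, !assoc, invr, idl in E.
  rewrite <- E; symmetry; apply assoc.
Qed.

(* Coding g by the list of conjugates of an enumeration of N, there are only
   finitely many codes; a representative h of the code of g gives g h^-1. *)
Lemma normal_finite_centralizer_finite_index (N : T -> Prop) :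
  is_normal mul inv e N -> finite_set N ->
  exists M : list T, forall g, exists h,
    In h M /\ centralizer mul N (mul g (inv h)).
Proof.
  intros [_ HnN] HfinN.
  destruct (finite_set_enum N HfinN) as [l Hl].
  pose (code := fun g => map (conj g) l).
  destruct (finite_image_representatives code _
              (finite_set_lists N (length l) HfinN)) as [M HM].
  exists M; intros g.
  destruct (HM g) as [h [Hh Hcode]].
  { unfold code; split; [apply length_map|].
    intros y Hy; apply in_map_iff in Hy; destruct Hy as [x [<- Hx]].
    apply HnN, Hl, Hx. }
  exists h; split; [exact Hh|].
  apply conj_eq_centralizer; intros x Nx.
  apply map_ext_in_iff with (a := x) in Hcode; [now symmetry|now apply Hl].
Qed.

End Conjugation.

Theorem lemma2p3 (T : Type) (mul : T -> T -> T) (inv : T -> T) (e : T)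
  (hG : @group_struct T mul inv e)
  (hinf : infinite_set (fun _ : T => True))
  (hC : forall H : T -> Prop, is_subgroup mul inv e H -> ~ is_abelian mul H ->
        subset (centralizer mul H) H) :
  forall N : T -> Prop, is_normal mul inv e N ->
    is_abelian mul N \/ infinite_set N.
Proof.
  intros N HN.
  destruct (classic (is_abelian mul N)) as [Hab|Hnab]; [now left|right].
  intros HfinN.
  destruct (normal_finite_centralizer_finite_index mul inv e hG N HN HfinN)
    as [M HM].
  apply hinf.
  destruct (finite_set_products mul N M HfinN) as [L HL].
  exists L; intros g _; apply HL.
  destruct (HM g) as [h [Hh Hcent]].
  exists (mul g (inv h)), h; repeat split; auto.
  - exact (hC N (proj1 HN) Hnab _ Hcent).
  - now rewrite (mul_invK mul inv e hG).
Qed.
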